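(* Let $\Omega_\star$ be a discrete filtered set centred at $\omega\in\mathbb{C}$ and let $H$ be an $\Omega_\star$-homotopy. Then there exist a good open covering $(I_i)_{0\le i\le n}$ of $[0,1]$ and positive real numbers $L_0,\dots,L_n$ such that for every $i=0,\dots,n$ and every $t\in I_i$, $H_t\in\mathfrak{R}_{\Omega_\star}(L_i)$, and for every $i=0,\dots,n-1$ and every $t\in I_i\cap I_{i+1}$, $H_t\in\mathfrak{R}_{\Omega_\star}(L_i)\cap\mathfrak{R}_{\Omega_\star}(L_{i+1})$.
   Context: A discrete filtered set centred at $\omega$ is a family $\Omega_\star=(\Omega_L)_{L>0}$ of finite subsets of $\mathbb{C}$ with $\Omega_L\subset D(\omega,L)$, $\Omega_{L_1}\subseteq\Omega_{L_2}$ for $L_1\le L_2$, and $\Omega_L=\{\omega\}$ for small $L>0$. For a path $\lambda:[a,a+l]\to\mathbb{C}$, $\underline\lambda(t)=\lambda(a+tl)$ is its standardization; $\mathcal{L}_\lambda$ is the length. $\mathfrak{R}_{\Omega_\star}(L)$ is the set of piecewise $\mathcal{C}^1$ paths $\lambda$ starting at $\omega$ with $\mathcal{L}_\lambda<L$ which are either constant or such that for some $t_0\in[0,1)$, $\underline\lambda([0,t_0])=\{\omega\}$ and $\underline\lambda((t_0,1])\subset D(\omega,L)\setminus\Omega_L$. A path is $\Omega_\star$-allowed if it is in $\mathfrak{R}_{\Omega_\star}(L)$ for some $L>0$. An $\Omega_\star$-homotopy is a continuous map $H:[0,1]^2\to\mathbb{C}$, $(s,t)\mapsto H_t(s)$,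 having a continuous partial derivative $\partial H/\partial s$, such that each path $H_t$ is $\Omega_\star$-allowed. A good open covering of $[0,1]$ is a finite covering by relatively open connected intervals with no triple intersections. *)

From Stdlib Require Import Reals.
From Coquelicot Require Import Coquelicot.
Open Scope R_scope.

Fixpoint rsum (f : nat -> R) (n : nat) : R :=
  match n with O => 0 | S m => rsum f m + f m end.

Definition disc (w : C) (r : R) (z : C) : Prop := Cmod (Cminus z w) < r.

Definition finite_set (A : C -> Prop) : Prop :=
  exists l : list C, forall z, A z <-> List.In z l.

(* Discrete filtered set centred at w: Om L is Omega_L (meaningful for L > 0). *)
Definition discrete_filtered_set (w : C) (Om : R -> C -> Prop) : Prop :=
  (forall L, 0 < L -> finite_set (Om L)) /\
  (forall L z, 0 < L -> Om L z -> disc w L z) /\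
  (forall L1 L2 z, 0 < L1 -> L1 <= L2 -> Om L1 z -> Om L2 z) /\
  (exists eps, 0 < eps /\ forall L, 0 < L < eps -> forall z, Om L z <-> z = w).

Definition C1_fun (g : R -> C) : Prop :=
  forall s,
    ex_derive (fun u => fst (g u)) s /\ ex_derive (fun u => snd (g u)) s /\
    continuous (Derive (fun u => fst (g u))) s /\
    continuous (Derive (fun u => snd (g u))) s.

Definition speed (g : R -> C) (s : R) : R :=
  Cmod (Derive (fun u => fst (g u)) s, Derive (fun u => snd (g u)) s).

(* Paths are (standardized) maps [0,1] -> C, given as functions R -> C of which
   only the values on [0,1] matter.
   is_length lam ell : lam is piecewise C^1 on [0,1] (subdivision
   0 = sub 0 < ... < sub k = 1, each piece being the restriction of a C^1 map
   g j) and ell = sum_j int_{sub j}^{sub (j+1)} |g_j'|, the length of lam. *)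
Definition is_length (lam : R -> C) (ell : R) : Prop :=
  exists (k : nat) (sub : nat -> R) (g : nat -> R -> C),
    (1 <= k)%nat /\ sub O = 0 /\ sub k = 1 /\
    (forall j, (j < k)%nat -> sub j < sub (S j)) /\
    (forall j, (j < k)%nat -> C1_fun (g j)) /\
    (forall j s, (j < k)%nat -> sub j <= s <= sub (S j) -> g j s = lam s) /\
    ell = rsum (fun j => RInt (speed (g j)) (sub j) (sub (S j))) k.

Definition piecewise_C1 (lam : R -> C) : Prop := exists ell, is_length lam ell.

Definition in_R (w : C) (Om : R -> C -> Prop) (L : R) (lam : R -> C) : Prop :=
  piecewise_C1 lam /\ lam 0 = w /\
  (exists ell, is_length lam ell /\ ell < L) /\
  ((forall s, 0 <= s <= 1 -> lam s = w) \/
   (exists t0, 0 <= t0 < 1 /\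
      (forall s, 0 <= s <= t0 -> lam s = w) /\
      (forall s, t0 < s <= 1 -> disc w L (lam s) /\ ~ Om L (lam s)))).

Definition allowed (w : C) (Om : R -> C -> Prop) (lam : R -> C) : Prop :=
  exists L, 0 < L /\ in_R w Om L lam.

Definition in_square (s t : R) : Prop := 0 <= s <= 1 /\ 0 <= t <= 1.

Definition cont_on_square (F : R -> R -> C) : Prop :=
  forall s t, in_square s t -> forall eps, 0 < eps -> exists delta, 0 < delta /\
    forall s' t', in_square s' t' -> Rabs (s' - s) < delta -> Rabs (t' - t) < delta ->
      Cmod (Cminus (F s' t') (F s t)) < eps.

(* Omega-homotopy: H s t = H_t(s). *)
Definition Omega_homotopy (w : C) (Om : R -> C -> Prop) (H : R -> R -> C) : Prop :=
  cont_on_square H /\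
  (exists dH : R -> R -> C,
     cont_on_square dH /\
     (forall s t, in_square s t -> forall eps, 0 < eps -> exists delta, 0 < delta /\
        forall h, h <> 0 -> 0 <= s + h <= 1 -> Rabs h < delta ->
          Cmod (Cminus (Cminus (H (s + h) t) (H s t)) (Cmult (RtoC h) (dH s t)))
            <= eps * Rabs h)) /\
  (forall t, 0 <= t <= 1 -> allowed w Om (fun s => H s t)).

Definition rel_open_interval (I : R -> Prop) : Prop :=
  (forall x, I x -> 0 <= x <= 1) /\
  (forall x y z, I x -> I y -> x <= z <= y -> I z) /\
  (forall x, I x -> exists delta, 0 < delta /\
     forall y, 0 <= y <= 1 -> Rabs (y - x) < delta -> I y).

Definition good_open_covering (n : nat) (I : nat -> R -> Prop) : Prop :=
  (forall i, (i <= n)%nat -> rel_open_interval (I i)) /\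
  (forall t, 0 <= t <= 1 -> exists i, (i <= n)%nat /\ I i t) /\
  (forall i j k t, (i <= n)%nat -> (j <= n)%nat -> (k <= n)%nat ->
     i <> j -> j <> k -> i <> k -> ~ (I i t /\ I j t /\ I k t)).

(* The length of H_t is the integral over [0,1] of |dH/ds(s,t)|, which depends
   continuously on t because dH/ds is uniformly continuous on the square.  So if
   H_t lies in R(L), the nearby paths H_t' still have length < L, and by uniform
   continuity of H they stay in D(w,L) and away from the finitely many points of
   Omega_L other than w; since H_t' leaves w only through points outside
   Omega_L' (which contains w), they lie in R(L) as well.  A Lebesgue number of
   the resulting open cover of [0,1] makes every interval of a fine enough grid
   of overlapping intervals fit inside one member of the cover. *)

From Pilot Require Import Defs.
From Stdlib Require Import Reals Lra Lia Classical ClassicalEpsilon.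
From Coquelicot Require Import Coquelicot.
Open Scope R_scope.

Lemma Cmod_minus_triangle (a b c : C) :
  Cmod (Cminus a c) <= Cmod (Cminus a b) + Cmod (Cminus b c).
Proof.
  replace (Cminus a c) with (Cplus (Cminus a b) (Cminus b c)) by ring.
  apply Cmod_triangle.
Qed.

Lemma Cmod_minus_sym (a b : C) : Cmod (Cminus a b) = Cmod (Cminus b a).
Proof. rewrite <- Cmod_opp. f_equal. ring. Qed.

Lemma Cmod_minus_diag (a : C) : Cmod (Cminus a a) = 0.
Proof. replace (Cminus a a) with (RtoC 0) by ring. apply Cmod_0. Qed.

Lemma Cmod_minus_gt0 (a b : C) : a <> b -> 0 < Cmod (Cminus a b).
Proof.
  intro Hab. apply Cmod_gt_0. intro E. apply Hab.
  replace a with (Cplus (Cminus a b) b) by ring. rewrite E. ring.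
Qed.

Lemma Cmod_minus_reverse (a b : C) : Rabs (Cmod a - Cmod b) <= Cmod (Cminus a b).
Proof.
  pose proof (Cmod_triangle (Cminus a b) b) as Ha.
  pose proof (Cmod_triangle (Cminus b a) a) as Hb.
  replace (Cplus (Cminus a b) b) with a in Ha by ring.
  replace (Cplus (Cminus b a) a) with b in Hb by ring.
  rewrite (Cmod_minus_sym b a) in Hb. apply Rabs_le; lra.
Qed.

Definition clamp (x : R) : R := Rmax 0 (Rmin 1 x).

Lemma clamp_in x : 0 <= clamp x <= 1.
Proof. unfold clamp, Rmax, Rmin; repeat destruct Rle_dec; lra. Qed.

Lemma clamp_id x : 0 <= x <= 1 -> clamp x = x.
Proof. unfold clamp, Rmax, Rmin; repeat destruct Rle_dec; lra. Qed.

Lemma clamp_le0 x : x <= 0 -> clamp x = 0.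
Proof. unfold clamp, Rmax, Rmin; repeat destruct Rle_dec; lra. Qed.

Lemma clamp_ge1 x : 1 <= x -> clamp x = 1.
Proof. unfold clamp, Rmax, Rmin; repeat destruct Rle_dec; lra. Qed.

Lemma clamp_lipschitz x y : Rabs (clamp x - clamp y) <= Rabs (x - y).
Proof. unfold clamp, Rmax, Rmin; repeat destruct Rle_dec; unfold Rabs; repeat destruct Rcase_abs; lra. Qed.

Lemma clamp_nearest x s : 0 <= s <= 1 -> Rabs (x - clamp x) <= Rabs (x - s).
Proof. intros. unfold clamp, Rmax, Rmin; repeat destruct Rle_dec; unfold Rabs; repeat destruct Rcase_abs; lra. Qed.

Section AffineExtension.

Variables f df : R -> R.

Hypothesis df_cont : forall s, 0 <= s <= 1 -> forall eps, 0 < eps -> exists d, 0 < d /\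
  forall s', 0 <= s' <= 1 -> Rabs (s' - s) < d -> Rabs (df s' - df s) < eps.

Hypothesis f_deriv : forall s, 0 <= s <= 1 -> forall eps, 0 < eps -> exists d, 0 < d /\
  forall h, h <> 0 -> 0 <= s + h <= 1 -> Rabs h < d ->
    Rabs (f (s + h) - f s - h * df s) <= eps * Rabs h.

Definition affine_extension (s : R) : R := f (clamp s) + (s - clamp s) * df (clamp s).

Lemma affine_extension_eq s : 0 <= s <= 1 -> affine_extension s = f s.
Proof. intro Hs. unfold affine_extension. rewrite clamp_id by exact Hs. ring. Qed.

Lemma affine_extension_derivable_in s : 0 <= s <= 1 ->
  derivable_pt_lim affine_extension s (df s).
Proof.
  intros Hs eps Heps.
  destruct (f_deriv s Hs (eps / 4) ltac:(lra)) as [d1 [Hd1 Hf]].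
  destruct (df_cont s Hs (eps / 4) ltac:(lra)) as [d2 [Hd2 Hdf]].
  exists (mkposreal (Rmin d1 d2) ltac:(apply Rmin_pos; lra)); simpl.
  intros h Hh0 Hh. pose proof (Rmin_l d1 d2). pose proof (Rmin_r d1 d2).
  set (c := clamp (s + h)).
  assert (Hc : 0 <= c <= 1) by apply clamp_in.
  assert (Hcs : Rabs (c - s) <= Rabs h).
  { pose proof (clamp_lipschitz (s + h) s) as E. rewrite (clamp_id s Hs) in E.
    replace (s + h - s) with h in E by ring. exact E. }
  assert (Hsc : Rabs (s + h - c) <= Rabs h).
  { pose proof (clamp_nearest (s + h) s Hs) as E.
    replace (s + h - s) with h in E by ring. exact E. }
  assert (Tf : Rabs (f c - f s - (c - s) * df s) <= eps / 4 * Rabs h).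
  { destruct (Req_dec (c - s) 0) as [E|E].
    - replace c with s by lra. replace (f s - f s - (s - s) * df s) with 0 by ring.
      rewrite Rabs_R0. pose proof (Rabs_pos h). nra.
    - pose proof (Hf (c - s) E ltac:(replace (s + (c - s)) with c by ring; lra) ltac:(lra)) as Hfc.
      replace (s + (c - s)) with c in Hfc by ring. pose proof (Rabs_pos h). nra. }
  assert (Tdf : Rabs ((s + h - c) * (df c - df s)) <= eps / 4 * Rabs h).
  { rewrite Rabs_mult. pose proof (Hdf c Hc ltac:(lra)).
    pose proof (Rabs_pos (s + h - c)). pose proof (Rabs_pos (df c - df s)). nra. }
  (* the increment splits into the one-sided Taylor error of [f] at [s] and the
     affine overshoot beyond the clamped point [c] *)
  unfold affine_extension. fold c. rewrite (clamp_id s Hs).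
  replace ((f c + (s + h - c) * df c - (f s + (s - s) * df s)) / h - df s)
    with ((f c - f s - (c - s) * df s + (s + h - c) * (df c - df s)) / h) by (field; auto).
  unfold Rdiv. rewrite Rabs_mult, Rabs_inv.
  pose proof (Rabs_triang (f c - f s - (c - s) * df s) ((s + h - c) * (df c - df s))).
  assert (Hh' : 0 < Rabs h) by (apply Rabs_pos_lt; auto).
  apply (Rmult_lt_reg_r (Rabs h)); auto.
  rewrite Rmult_assoc, Rinv_l by lra. nra.
Qed.

Lemma affine_extension_is_derive s : is_derive affine_extension s (df (clamp s)).
Proof.
  destruct (Rlt_le_dec s 0) as [Hs0|Hs0]; [|destruct (Rlt_le_dec 1 s) as [Hs1|Hs1]].
  - apply (is_derive_ext_loc (fun u => f 0 + (u - 0) * df 0)).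
    + apply (locally_interval _ s m_infty 0); simpl; auto.
      intros u _ Hu. unfold affine_extension. rewrite clamp_le0 by lra. reflexivity.
    + rewrite clamp_le0 by lra. auto_derive; auto. ring.
  - apply (is_derive_ext_loc (fun u => f 1 + (u - 1) * df 1)).
    + apply (locally_interval _ s 1 p_infty); simpl; auto.
      intros u Hu _. unfold affine_extension. rewrite clamp_ge1 by lra. reflexivity.
    + rewrite clamp_ge1 by lra. auto_derive; auto. ring.
  - rewrite clamp_id by lra. apply is_derive_Reals, affine_extension_derivable_in. lra.
Qed.

Lemma clamped_derivative_continuous s : continuous (fun u => df (clamp u)) s.
Proof.
  apply continuity_pt_filterlim. intros eps Heps.
  destruct (df_cont (clamp s) (clamp_in s) eps Heps) as [d [Hd Hdf]].
  exists d; split; auto. intros x [_ Hx]. simpl in Hx |- *. unfold R_dist in *.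
  apply Hdf; [apply clamp_in|]. pose proof (clamp_lipschitz x s). lra.
Qed.

End AffineExtension.

Lemma lebesgue_number_unit_interval (P : R -> R -> Prop) :
  (forall s, 0 <= s <= 1 -> exists g, 0 < g /\ P s g) ->
  exists d, 0 < d /\ forall x, 0 <= x <= 1 ->
    exists s g, 0 <= s <= 1 /\ P s g /\ Rabs (x - s) < g /\ d <= g.
Proof.
  intros HP.
  destruct (choice (fun s (g : posreal) => 0 <= s <= 1 -> P s g)) as [gam Hgam].
  { intro s. destruct (classic (0 <= s <= 1)) as [Hs|Hs].
    - destruct (HP s Hs) as [g [Hg HPg]]. exists (mkposreal g Hg). auto.
    - exists (mkposreal 1 Rlt_0_1). tauto. }
  destruct (compactness_value_1d 0 1 gam) as [d Hd].
  exists d. split; [apply cond_pos|]. intros x Hx.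
  apply NNPP. intro Hn. apply (Hd x Hx). intros [s [Hs [Hxs Hds]]]. apply Hn.
  exists s, (gam s). auto.
Qed.

Lemma tube_lemma (t : R) (P : R -> R -> Prop) :
  (forall s, 0 <= s <= 1 -> exists r, 0 < r /\ forall s' t', in_square s' t' ->
     Rabs (s' - s) < r -> Rabs (t' - t) < r -> P s' t') ->
  exists d, 0 < d /\ forall s t', in_square s t' -> Rabs (t' - t) < d -> P s t'.
Proof.
  intros Hloc.
  destruct (lebesgue_number_unit_interval (fun s r => forall s' t', in_square s' t' ->
              Rabs (s' - s) < r -> Rabs (t' - t) < r -> P s' t') Hloc) as [d [Hd Hleb]].
  exists d. split; auto. intros s t' Hst Ht.
  destruct (Hleb s (proj1 Hst)) as [s0 [r [_ [HP [Hs Hdr]]]]].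
  apply HP; auto; lra.
Qed.

Lemma cont_on_square_uniform (F : R -> R -> C) (t : R) :
  cont_on_square F -> 0 <= t <= 1 -> forall eps, 0 < eps ->
  exists d, 0 < d /\ forall s t', in_square s t' -> Rabs (t' - t) < d ->
    Cmod (Cminus (F s t') (F s t)) < eps.
Proof.
  intros HF Ht eps Heps. apply tube_lemma. intros s Hs.
  destruct (HF s t (conj Hs Ht) (eps / 2) ltac:(lra)) as [r [Hr HFr]].
  exists r. split; auto. intros s' t' Hst Hs' Ht'.
  pose proof (HFr s' t' Hst Hs' Ht') as E1.
  assert (E2 : Cmod (Cminus (F s' t) (F s t)) < eps / 2).
  { apply HFr; [split; [apply Hst|exact Ht]|exact Hs'|].
    rewrite Rminus_diag, Rabs_R0. exact Hr. }
  pose proof (Cmod_minus_triangle (F s' t') (F s t) (F s' t)) as E.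
  rewrite (Cmod_minus_sym (F s t)) in E. lra.
Qed.

Lemma rsum_ext (f g : nat -> R) n :
  (forall j, (j < n)%nat -> f j = g j) -> rsum f n = rsum g n.
Proof.
  induction n as [|n IH]; intro E; simpl; auto.
  rewrite IH, E by (auto; intros; apply E; lia). reflexivity.
Qed.

Lemma rsum_RInt_Chasles (f : R -> R) (sub : nat -> R) m :
  (forall a b, ex_RInt f a b) ->
  rsum (fun j => RInt f (sub j) (sub (S j))) m = RInt f (sub O) (sub m).
Proof.
  intros Hf. induction m as [|m IH]; simpl.
  - rewrite RInt_point. reflexivity.
  - rewrite IH. exact (RInt_Chasles f _ _ _ (Hf _ _) (Hf _ _)).
Qed.

Lemma subdivision_in_unit_interval (sub : nat -> R) k :
  sub O = 0 -> sub k = 1 -> (forall j, (j < k)%nat -> sub j < sub (S j)) ->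
  forall j, (j <= k)%nat -> 0 <= sub j <= 1.
Proof.
  intros H0 H1 Hinc.
  assert (Hmono : forall j m, (j + m <= k)%nat -> sub j <= sub (j + m)%nat).
  { intros j m. induction m as [|m IH]; intro Hjm.
    - rewrite Nat.add_0_r. lra.
    - rewrite Nat.add_succ_r. pose proof (Hinc (j + m)%nat ltac:(lia)). specialize (IH ltac:(lia)). lra. }
  intros j Hj. split.
  - rewrite <- H0. exact (Hmono O j Hj).
  - rewrite <- H1. pose proof (Hmono j (k - j)%nat ltac:(lia)) as E.
    replace (j + (k - j))%nat with k in E by lia. exact E.
Qed.

Lemma speed_ext_loc (g h : R -> C) x :
  locally x (fun u => g u = h u) -> speed g x = speed h x.
Proof.
  intros E. unfold speed.
  rewrite (Derive_ext_loc (fun u => fst (g u)) (fun u => fst (h u))),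
          (Derive_ext_loc (fun u => snd (g u)) (fun u => snd (h u))); auto;
    apply (filter_imp (fun u => g u = h u)); auto; intros u ->; reflexivity.
Qed.

Definition partial_s_derivative (H dH : R -> R -> C) : Prop :=
  forall s t, in_square s t -> forall eps, 0 < eps -> exists delta, 0 < delta /\
    forall h, h <> 0 -> 0 <= s + h <= 1 -> Rabs h < delta ->
      Cmod (Cminus (Cminus (H (s + h) t) (H s t)) (Cmult (RtoC h) (dH s t)))
        <= eps * Rabs h.

Definition is_coordinate (pr : C -> R) : Prop :=
  (forall z, Rabs (pr z) <= Cmod z) /\
  (forall a b h d, pr (Cminus (Cminus a b) (Cmult (RtoC h) d)) = pr a - pr b - h * pr d).

Lemma is_coordinate_fst : is_coordinate fst.
Proof.
  split.
  - intro z. pose proof (Rmax_Cmod z). pose proof (Rmax_l (Rabs (fst z)) (Rabs (snd z))). lra.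
  - intros [] [] h []. simpl. ring.
Qed.

Lemma is_coordinate_snd : is_coordinate snd.
Proof.
  split.
  - intro z. pose proof (Rmax_Cmod z). pose proof (Rmax_r (Rabs (fst z)) (Rabs (snd z))). lra.
  - intros [] [] h []. simpl. ring.
Qed.

Lemma is_coordinate_minus (pr : C -> R) a b :
  is_coordinate pr -> pr (Cminus a b) = pr a - pr b.
Proof.
  intros [_ Hlin].
  replace (Cminus a b) with (Cminus (Cminus a b) (Cmult (RtoC 0) (RtoC 0))) by ring.
  rewrite Hlin. ring.
Qed.

Section HomotopyLength.

Variables H dH : R -> R -> C.
Hypothesis dH_cont : cont_on_square dH.
Hypothesis H_deriv : partial_s_derivative H dH.

Section Coordinate.

Variables (pr : C -> R) (t : R).
Hypothesis pr_coord : is_coordinate pr.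
Hypothesis t_in : 0 <= t <= 1.

Lemma coordinate_derivative_cont : forall s, 0 <= s <= 1 -> forall eps, 0 < eps ->
  exists d, 0 < d /\ forall s', 0 <= s' <= 1 -> Rabs (s' - s) < d ->
    Rabs (pr (dH s' t) - pr (dH s t)) < eps.
Proof.
  intros s Hs eps Heps.
  destruct (dH_cont s t (conj Hs t_in) eps Heps) as [d [Hd Hc]].
  exists d. split; auto. intros s' Hs' Hss'.
  rewrite <- is_coordinate_minus by exact pr_coord.
  eapply Rle_lt_trans; [apply pr_coord|]. apply Hc; [split; auto|auto|].
  rewrite Rminus_diag, Rabs_R0. exact Hd.
Qed.

Lemma coordinate_derivative : forall s, 0 <= s <= 1 -> forall eps, 0 < eps ->
  exists d, 0 < d /\ forall h, h <> 0 -> 0 <= s + h <= 1 -> Rabs h < d ->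
    Rabs (pr (H (s + h) t) - pr (H s t) - h * pr (dH s t)) <= eps * Rabs h.
Proof.
  intros s Hs eps Heps.
  destruct (H_deriv s t (conj Hs t_in) eps Heps) as [d [Hd Hdiff]].
  exists d. split; auto. intros h Hh Hsh Hhd.
  rewrite <- (proj2 pr_coord). eapply Rle_trans; [apply pr_coord|]. auto.
Qed.

Lemma coordinate_extension_is_derive s :
  is_derive (affine_extension (fun u => pr (H u t)) (fun u => pr (dH u t))) s
    (pr (dH (clamp s) t)).
Proof.
  apply affine_extension_is_derive.
  - exact coordinate_derivative_cont.
  - exact coordinate_derivative.
Qed.

Lemma coordinate_extension_derivative_continuous s :
  continuous (fun u => pr (dH (clamp u) t)) s.
Proof. apply (clamped_derivative_continuous (fun u => pr (dH u t))), coordinate_derivative_cont. Qed.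

End Coordinate.

(* Paths in [C1_fun] must be C^1 on the whole real line, so [H_t] is continued
   affinely beyond [0,1] with its one-sided end derivatives. *)
Definition path_extension (t s : R) : C :=
  (affine_extension (fun u => fst (H u t)) (fun u => fst (dH u t)) s,
   affine_extension (fun u => snd (H u t)) (fun u => snd (dH u t)) s).

Lemma path_extension_eq t s : 0 <= s <= 1 -> path_extension t s = H s t.
Proof.
  intro Hs. unfold path_extension. rewrite !affine_extension_eq by exact Hs.
  destruct (H s t); reflexivity.
Qed.

Lemma Derive_path_extension t s : 0 <= t <= 1 ->
  Derive (fun u => fst (path_extension t u)) s = fst (dH (clamp s) t) /\
  Derive (fun u => snd (path_extension t u)) s = snd (dH (clamp s) t).
Proof.
  intro Ht. split; apply is_derive_unique.
  - exact (coordinate_extension_is_derive fst t is_coordinate_fst Ht s).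
  - exact (coordinate_extension_is_derive snd t is_coordinate_snd Ht s).
Qed.

Lemma path_extension_C1 t : 0 <= t <= 1 -> Defs.C1_fun (path_extension t).
Proof.
  intros Ht s. repeat split.
  - eexists. exact (coordinate_extension_is_derive fst t is_coordinate_fst Ht s).
  - eexists. exact (coordinate_extension_is_derive snd t is_coordinate_snd Ht s).
  - eapply continuous_ext; [|exact (coordinate_extension_derivative_continuous fst t is_coordinate_fst Ht s)].
    intro u. symmetry. apply Derive_path_extension, Ht.
  - eapply continuous_ext; [|exact (coordinate_extension_derivative_continuous snd t is_coordinate_snd Ht s)].
    intro u. symmetry. apply Derive_path_extension, Ht.
Qed.

Definition homotopy_speed (t s : R) : R := Cmod (dH (clamp s) t).

Definition path_length (t : R) : R := RInt (homotopy_speed t) 0 1.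

Lemma speed_path_extension t s : 0 <= t <= 1 ->
  speed (path_extension t) s = homotopy_speed t s.
Proof.
  intro Ht. unfold speed, homotopy_speed.
  destruct (Derive_path_extension t s Ht) as [-> ->].
  destruct (dH (clamp s) t); reflexivity.
Qed.

Lemma homotopy_speed_continuous t s : 0 <= t <= 1 -> continuous (homotopy_speed t) s.
Proof.
  intro Ht. apply continuity_pt_filterlim. intros eps Heps.
  destruct (dH_cont (clamp s) t (conj (clamp_in s) Ht) eps Heps) as [d [Hd Hc]].
  exists d. split; auto. intros x [_ Hx]. simpl in Hx |- *. unfold R_dist in *.
  eapply Rle_lt_trans; [apply Cmod_minus_reverse|]. apply Hc.
  - split; [apply clamp_in|exact Ht].
  - pose proof (clamp_lipschitz x s). lra.
  - rewrite Rminus_diag, Rabs_R0. exact Hd.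
Qed.

Lemma ex_RInt_homotopy_speed t a b : 0 <= t <= 1 -> ex_RInt (homotopy_speed t) a b.
Proof. intro Ht. apply (ex_RInt_continuous (V := R_CompleteNormedModule)). intros. apply homotopy_speed_continuous, Ht. Qed.

Lemma is_length_homotopy_path t : 0 <= t <= 1 ->
  is_length (fun s => H s t) (path_length t).
Proof.
  intro Ht.
  exists 1%nat, (fun j => if Nat.eqb j 0 then 0 else 1), (fun _ => path_extension t).
  refine (conj (le_n 1) (conj eq_refl (conj eq_refl (conj _ (conj _ (conj _ _)))))).
  - intros j Hj. replace j with O by lia. simpl. lra.
  - intros j _. apply path_extension_C1, Ht.
  - intros j s Hj Hs. replace j with O in Hs by lia. apply path_extension_eq. simpl in Hs. lra.
  - simpl. rewrite Rplus_0_l. apply RInt_ext. intros x _. symmetry. apply speed_path_extension, Ht.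
Qed.

Lemma is_length_homotopy_path_unique t e : 0 <= t <= 1 ->
  is_length (fun s => H s t) e -> e = path_length t.
Proof.
  intros Ht [k [sub [g [Hk [H0 [H1 [Hinc [_ [Hg ->]]]]]]]]].
  pose proof (subdivision_in_unit_interval sub k H0 H1 Hinc) as Hsub.
  rewrite (rsum_ext _ (fun j => RInt (homotopy_speed t) (sub j) (sub (S j)))).
  - rewrite rsum_RInt_Chasles, H0, H1 by (intros; apply ex_RInt_homotopy_speed, Ht).
    reflexivity.
  - intros j Hj. apply RInt_ext. intros x Hx.
    rewrite Rmin_left, Rmax_right in Hx by (apply Rlt_le, Hinc, Hj).
    pose proof (Hsub j ltac:(lia)). pose proof (Hsub (S j) ltac:(lia)).
    rewrite <- (speed_path_extension t x Ht). apply speed_ext_loc.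
    apply (locally_interval _ x (sub j) (sub (S j))); simpl; try lra.
    intros y Hy1 Hy2. rewrite Hg, path_extension_eq; auto; lra.
Qed.

Lemma path_length_continuous t : 0 <= t <= 1 -> forall eps, 0 < eps ->
  exists d, 0 < d /\ forall t', 0 <= t' <= 1 -> Rabs (t' - t) < d ->
    Rabs (path_length t' - path_length t) <= eps.
Proof.
  intros Ht eps Heps.
  destruct (cont_on_square_uniform dH t dH_cont Ht eps Heps) as [d [Hd Hunif]].
  exists d. split; auto. intros t' Ht' Htt'. unfold path_length.
  replace (RInt (homotopy_speed t') 0 1 - RInt (homotopy_speed t) 0 1)
    with (RInt (fun x => homotopy_speed t' x - homotopy_speed t x) 0 1)
    by exact (RInt_minus _ _ 0 1 (ex_RInt_homotopy_speed t' 0 1 Ht')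
                (ex_RInt_homotopy_speed t 0 1 Ht)).
  replace eps with ((1 - 0) * eps) by ring.
  apply abs_RInt_le_const; [lra| |].
  - apply (ex_RInt_minus (V := R_CompleteNormedModule)); apply ex_RInt_homotopy_speed; auto.
  - intros x Hx. unfold homotopy_speed. rewrite clamp_id by exact Hx.
    eapply Rle_trans; [apply Cmod_minus_reverse|]. apply Rlt_le, Hunif; auto. split; auto.
Qed.

End HomotopyLength.

Definition allowed_region (w : C) (Om : R -> C -> Prop) (L : R) (z : C) : Prop :=
  Defs.disc w L z /\ (Om L z -> z = w).

Lemma center_in_filtered_set w Om L : discrete_filtered_set w Om -> 0 < L -> Om L w.
Proof.
  intros [_ [_ [Hmono [eps [Heps Hsmall]]]]] HL.
  apply (Hmono (Rmin (eps / 2) L)).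
  - apply Rmin_pos; lra.
  - apply Rmin_r.
  - apply Hsmall; [|reflexivity]. split; [apply Rmin_pos; lra|].
    pose proof (Rmin_l (eps / 2) L). lra.
Qed.

Lemma in_R_allowed_region w Om L lam : 0 < L -> in_R w Om L lam ->
  forall s, 0 <= s <= 1 -> allowed_region w Om L (lam s).
Proof.
  intros HL [_ [_ [_ Hbr]]] s Hs.
  assert (Hw : allowed_region w Om L w).
  { split; [unfold Defs.disc; rewrite Cmod_minus_diag; exact HL|reflexivity]. }
  destruct Hbr as [Hcst|[t0 [_ [Hle Hgt]]]].
  - rewrite Hcst by exact Hs. exact Hw.
  - destruct (Rle_dec s t0) as [Hst|Hst].
    + rewrite Hle by lra. exact Hw.
    + destruct (Hgt s ltac:(lra)) as [Hdisc HOm]. split; tauto.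
Qed.

Lemma in_R_of_allowed_region w Om L lam e : discrete_filtered_set w Om ->
  allowed w Om lam -> is_length lam e -> e < L ->
  (forall s, 0 <= s <= 1 -> allowed_region w Om L (lam s)) -> in_R w Om L lam.
Proof.
  intros Hdfs [L' [HL' [_ [H0 [_ Hbr]]]]] He HeL Hreg.
  split; [exists e; exact He|]. split; [exact H0|]. split; [exists e; auto|].
  destruct Hbr as [Hcst|[t0 [Ht0 [Hle Hgt]]]]; [left; exact Hcst|right].
  exists t0. split; [exact Ht0|]. split; [exact Hle|]. intros s Hs.
  destruct (Hreg s ltac:(lra)) as [Hdisc HOm]. split; [exact Hdisc|].
  (* [lam s] avoids [Om L'], which contains [w] *)
  intro Hin. apply (proj2 (Hgt s Hs)). rewrite (HOm Hin).
  apply center_in_filtered_set; auto.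
Qed.

Lemma finite_set_isolated (A : C -> Prop) (w p : C) : finite_set A -> (A p -> p = w) ->
  exists r, 0 < r /\ forall z, Cmod (Cminus z p) < r -> A z -> z = w.
Proof.
  intros [l Hl] Hp.
  assert (Hlist : forall l : list C, (forall q, List.In q l -> q = p -> q = w) ->
            exists r, 0 < r /\ forall z, Cmod (Cminus z p) < r -> List.In z l -> z = w).
  { clear l Hl. induction l as [|a l IH]; intro Hlp.
    - exists 1. split; [lra|]. intros z _ [].
    - destruct IH as [r [Hr Hrl]]; [intros q Hq; apply Hlp; right; exact Hq|].
      destruct (classic (a = w)) as [Ea|Ea].
      + exists r. split; [exact Hr|]. intros z Hz [<-|Hzl]; auto.
      + assert (Hap : 0 < Cmod (Cminus a p)).
        { apply Cmod_minus_gt0. intro E. apply Ea, Hlp; [left|]; auto. }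
        exists (Rmin r (Cmod (Cminus a p))). split; [apply Rmin_pos; lra|].
        intros z Hz [<-|Hzl].
        * pose proof (Rmin_r r (Cmod (Cminus a p))). lra.
        * apply Hrl; [pose proof (Rmin_l r (Cmod (Cminus a p))); lra|exact Hzl]. }
  destruct (Hlist l) as [r [Hr Hrl]].
  - intros q Hq ->. apply Hp, Hl, Hq.
  - exists r. split; [exact Hr|]. intros z Hz HAz. apply Hrl, Hl; auto.
Qed.

Lemma allowed_region_open w Om L p : finite_set (Om L) -> allowed_region w Om L p ->
  exists r, 0 < r /\ forall z, Cmod (Cminus z p) < r -> allowed_region w Om L z.
Proof.
  intros Hfin [Hdisc HOm]. unfold Defs.disc in Hdisc.
  destruct (finite_set_isolated (Om L) w p Hfin HOm) as [r [Hr Hiso]].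
  exists (Rmin r (L - Cmod (Cminus p w))). split; [apply Rmin_pos; lra|].
  intros z Hz. pose proof (Rmin_l r (L - Cmod (Cminus p w))).
  pose proof (Rmin_r r (L - Cmod (Cminus p w))). split.
  - unfold Defs.disc. pose proof (Cmod_minus_triangle z p w). lra.
  - apply Hiso. lra.
Qed.

Lemma homotopy_locally_in_R w Om H t : discrete_filtered_set w Om ->
  Omega_homotopy w Om H -> 0 <= t <= 1 ->
  exists L d, 0 < L /\ 0 < d /\ forall t', 0 <= t' <= 1 -> Rabs (t' - t) < d ->
    in_R w Om L (fun s => H s t').
Proof.
  intros Hdfs [HcH [[dH [HcdH HdH]] Hall]] Ht.
  destruct (Hall t Ht) as [L [HL HinR]].
  assert (Hlen : path_length dH t < L).
  { destruct HinR as [_ [_ [[e [He HeL]] _]]].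
    rewrite <- (is_length_homotopy_path_unique H dH HcdH HdH t e Ht He). exact HeL. }
  destruct (path_length_continuous dH HcdH t Ht ((L - path_length dH t) / 2) ltac:(lra))
    as [d1 [Hd1 Hlen']].
  destruct (tube_lemma t (fun s t' => allowed_region w Om L (H s t'))) as [d2 [Hd2 Hreg]].
  { intros s Hs.
    destruct (allowed_region_open w Om L (H s t) (proj1 Hdfs L HL)
                (in_R_allowed_region w Om L _ HL HinR s Hs)) as [r [Hr Hball]].
    destruct (HcH s t (conj Hs Ht) r Hr) as [d [Hd Hcont]].
    exists d. split; [exact Hd|]. intros s' t' Hst Hs' Ht'. apply Hball, Hcont; auto. }
  exists L, (Rmin d1 d2). split; [exact HL|]. split; [apply Rmin_pos; lra|].
  intros t' Ht' Htt'. pose proof (Rmin_l d1 d2). pose proof (Rmin_r d1 d2).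
  apply (in_R_of_allowed_region w Om L _ (path_length dH t') Hdfs (Hall t' Ht')).
  - apply is_length_homotopy_path; auto.
  - specialize (Hlen' t' Ht' ltac:(lra)). apply Rabs_le_between' in Hlen'. lra.
  - intros s Hs. apply Hreg; [split; auto|lra].
Qed.

Lemma homotopy_uniformly_in_R w Om H : discrete_filtered_set w Om ->
  Omega_homotopy w Om H ->
  exists d, 0 < d /\ forall c, 0 <= c <= 1 -> exists L, 0 < L /\
    forall t, 0 <= t <= 1 -> Rabs (t - c) < d -> in_R w Om L (fun s => H s t).
Proof.
  intros Hdfs Hom.
  destruct (lebesgue_number_unit_interval (fun s g => exists L, 0 < L /\
              forall t, 0 <= t <= 1 -> Rabs (t - s) < 2 * g -> in_R w Om L (fun s => H s t)))
    as [d [Hd Hleb]].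
  { intros s Hs. destruct (homotopy_locally_in_R w Om H s Hdfs Hom Hs) as [L [g [HL [Hg Hloc]]]].
    exists (g / 2). split; [lra|]. exists L. split; [exact HL|].
    intros t Ht Hts. apply Hloc; [exact Ht|lra]. }
  exists d. split; [exact Hd|]. intros c Hc.
  destruct (Hleb c Hc) as [s [g [_ [[L [HL Hloc]] [Hcs Hdg]]]]].
  exists L. split; [exact HL|]. intros t Ht Htc. apply Hloc; [exact Ht|].
  pose proof (Rabs_triang (t - c) (c - s)) as Htri.
  replace (t - c + (c - s)) with (t - s) in Htri by ring. lra.
Qed.

(* Intervals of length 3/(2N) spaced 1/N apart: consecutive ones overlap and
   only neighbours meet. *)
Definition grid_interval (N : R) (i : nat) (x : R) : Prop :=
  0 <= x <= 1 /\ INR i - / 4 < x * N < INR i + 5 / 4.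

Lemma grid_interval_rel_open N i : 0 < N -> rel_open_interval (grid_interval N i).
Proof.
  intros HN. split; [|split].
  - intros x [Hx _]. exact Hx.
  - intros x y z [Hx [Hx1 Hx2]] [Hy [Hy1 Hy2]] Hz. split; [lra|].
    assert (x * N <= z * N) by (apply Rmult_le_compat_r; lra).
    assert (z * N <= y * N) by (apply Rmult_le_compat_r; lra). lra.
  - intros x [Hx [Hx1 Hx2]].
    set (m := Rmin (x * N - (INR i - / 4)) (INR i + 5 / 4 - x * N)).
    assert (Hm : 0 < m) by (apply Rmin_pos; lra).
    exists (m / N). split; [apply Rdiv_lt_0_compat; lra|].
    intros y Hy Hyx. split; [exact Hy|].
    assert (Hdist : Rabs (y * N - x * N) < m).
    { replace (y * N - x * N) with ((y - x) * N) by ring.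
      rewrite Rabs_mult, (Rabs_pos_eq N) by lra. apply Rlt_div_r in Hyx; lra. }
    pose proof (Rmin_l (x * N - (INR i - / 4)) (INR i + 5 / 4 - x * N)) as Hm1.
    pose proof (Rmin_r (x * N - (INR i - / 4)) (INR i + 5 / 4 - x * N)) as Hm2.
    apply Rabs_def2 in Hdist. fold m in Hm1, Hm2. lra.
Qed.

Lemma grid_interval_apart N a b x : (a + 2 <= b)%nat ->
  grid_interval N a x -> grid_interval N b x -> False.
Proof.
  intros Hab [_ [Ha1 Ha2]] [_ [Hb1 Hb2]].
  apply le_INR in Hab. rewrite plus_INR in Hab. simpl in Hab. lra.
Qed.

Lemma floor_nat m x : 0 <= x <= INR (S m) ->
  exists i, (i <= m)%nat /\ INR i <= x <= INR i + 1.
Proof.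
  revert x; induction m as [|m IH]; intros x Hx.
  - exists O. split; [lia|]. simpl in *. lra.
  - destruct (Rle_dec x (INR (S m))) as [Hle|Hgt].
    + destruct (IH x ltac:(lra)) as [i [Hi Hix]]. exists i. split; [lia|exact Hix].
    + exists (S m). split; [lia|]. rewrite (S_INR (S m)) in Hx. lra.
Qed.

Lemma grid_good_open_covering n : good_open_covering n (grid_interval (INR (S n))).
Proof.
  assert (HN : 0 < INR (S n)) by (apply lt_0_INR; lia).
  split; [|split].
  - intros i _. apply grid_interval_rel_open, HN.
  - intros t Ht. destruct (floor_nat n (t * INR (S n))) as [i [Hi Hti]]; [split; nra|].
    exists i. split; [exact Hi|]. split; [exact Ht|lra].
  - intros i j k t _ _ _ Hij Hjk Hik [Hi [Hj Hk]].
    assert (((i + 2 <= j) \/ (j + 2 <= i) \/ (i + 2 <= k) \/ (k + 2 <= i) \/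
             (j + 2 <= k) \/ (k + 2 <= j))%nat) as Hfar by lia.
    destruct Hfar as [E|[E|[E|[E|[E|E]]]]]; eapply grid_interval_apart; eauto.
Qed.

Lemma grid_interval_near_center n i : (i <= n)%nat ->
  exists c, 0 <= c <= 1 /\ forall x, grid_interval (INR (S n)) i x -> Rabs (x - c) < / INR (S n).
Proof.
  intro Hi. set (N := INR (S n)).
  assert (HN : N = INR n + 1) by apply S_INR.
  assert (Hin : INR i <= INR n) by (apply le_INR; exact Hi).
  pose proof (pos_INR i).
  exists ((INR i + / 2) / N). split.
  - split; [apply Rdiv_le_0_compat|apply Rle_div_l]; lra.
  - intros x [_ [Hx1 Hx2]].
    apply (Rmult_lt_reg_r N); [lra|]. rewrite Rinv_l by lra.
    replace (Rabs (x - (INR i + / 2) / N) * N) with (Rabs (x * N - (INR i + / 2))).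
    + apply Rabs_def1; lra.
    + replace (x * N - (INR i + / 2)) with ((x - (INR i + / 2) / N) * N) by (field; lra).
      rewrite Rabs_mult, (Rabs_pos_eq N) by lra. reflexivity.
Qed.

Theorem lemma2p8 (w : C) (Om : R -> C -> Prop) (H : R -> R -> C) :
  discrete_filtered_set w Om ->
  Omega_homotopy w Om H ->
  exists (n : nat) (I : nat -> R -> Prop) (L : nat -> R),
    good_open_covering n I /\
    (forall i, (i <= n)%nat -> 0 < L i) /\
    (forall i t, (i <= n)%nat -> I i t -> in_R w Om (L i) (fun s => H s t)) /\
    (forall i t, (i < n)%nat -> I i t -> I (S i) t ->
       in_R w Om (L i) (fun s => H s t) /\ in_R w Om (L (S i)) (fun s => H s t)).
Proof.
  intros Hdfs Hom.
  destruct (homotopy_uniformly_in_R w Om H Hdfs Hom) as [d [Hd Hunif]].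
  destruct (archimed_cor1 d Hd) as [[|n] [Hn Hn0]]; [lia|].
  assert (Hbound : forall i, exists L, 0 < L /\ ((i <= n)%nat ->
            forall t, grid_interval (INR (S n)) i t -> in_R w Om L (fun s => H s t))).
  { intro i. destruct (Compare_dec.le_lt_dec i n) as [Hi|Hi]; [|exists 1; split; [lra|lia]].
    destruct (grid_interval_near_center n i Hi) as [c [Hc Hnear]].
    destruct (Hunif c Hc) as [L [HL HinR]].
    exists L. split; [exact HL|]. intros _ t Ht.
    apply HinR; [apply Ht|]. pose proof (Hnear t Ht). lra. }
  destruct (choice _ Hbound) as [L HL].
  exists n, (grid_interval (INR (S n))), L.
  split; [apply grid_good_open_covering|]. split; [|split].
  - intros i _. apply HL.
  - intros i t Hi Ht. apply HL; auto.
  - intros i t Hi Hit HSit. split; apply HL; auto; lia.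
Qed.
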